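(* Let $f=[f_k]:\mathbb{R}^n\to\mathbb{R}^n$ and $g_p=[g_{p,k}]:\mathbb{R}^n\to\mathbb{R}^n$, $p\in\{1,\dots,d\}$, be functions, let $\alpha^1,\dots,\alpha^d\in\mathbb{N}^m$, and let $(x^i,\dot x^i,u^i)\in\mathbb{R}^n\times\mathbb{R}^n\times\mathbb{R}^m$ be a data point satisfying $\dot x^i=f(x^i)+\sum_{p=1}^d g_p(x^i)\,u^i[\alpha^p]$. Let $\mathcal{F}^i=[\mathcal{F}^i_k]\in\mathbb{IR}^n$ with $f(x^i)\in\mathcal{F}^i$ and $\mathcal{G}^i=[\mathcal{G}^i_{p,k}]\in\mathbb{IR}^{d\times n}$ with $g_{p,k}(x^i)\in\mathcal{G}^i_{p,k}$ for all $p,k$. For each $k\in\{1,\dots,n\}$ define, using interval arithmetic, $$C_{\mathcal{F}^i_k}=\mathcal{F}^i_k\cap\Big(\dot x^i_k-\sum_{p=1}^d\mathcal{G}^i_{p,k}\,u^i[\alpha^p]\Big),\qquad \mathcal{S}_{0,k}=\big(\dot x^i_k-C_{\mathcal{F}^i_k}\big)\cap\Big(\sum_{p=1}^d\mathcal{G}^i_{p,k}\,u^i[\alpha^p]\Big),$$ and recursively for $p=1,\dots,d$: $$C_{\mathcal{G}^i_{p,k}}=\begin{cases}\Big(\big(\mathcal{S}_{p-1,k}-\sum_{l=p+1}^d\mathcal{G}^i_{l,k}u^i[\alpha^l]\big)\cap\mathcal{G}^i_{p,k}u^i[\alpha^p]\Big)\dfrac{1}{u^i[\alpha^p]}, & \text{if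 } u^i[\alpha^p]\neq0,\\[1ex] \mathcal{G}^i_{p,k}, &\text{otherwise,}\end{cases}$$ $$\mathcal{S}_{p,k}=\big(\mathcal{S}_{p-1,k}-C_{\mathcal{G}^i_{p,k}}u^i[\alpha^p]\big)\cap\Big(\sum_{l=p+1}^d\mathcal{G}^i_{l,k}u^i[\alpha^l]\Big)$$ (an empty sum being $[0,0]$). Then $C_{\mathcal{F}^i}=[C_{\mathcal{F}^i_k}]$ and $C_{\mathcal{G}^i}=[C_{\mathcal{G}^i_{p,k}}]$ are the smallest intervals enclosing $f(x^i)$ and $g_p(x^i)$ given only the data $(x^i,\dot x^i,u^i)$, $\mathcal{F}^i$ and $\mathcal{G}^i$; that is, for every $k$ and $p$, $C_{\mathcal{F}^i_k}$ (resp. $C_{\mathcal{G}^i_{p,k}}$) is exactly the set of values of the $k$-th component of $F$ (resp. the $(p,k)$ entry of $G$) over all pairs $(F,G)\in\mathcal{F}^i\times\mathcal{G}^i$ satisfying $\dot x^i=F+\sum_{p=1}^d G_{p,\cdot}\,u^i[\alpha^p]$, where $G_{p,\cdot}\in\mathbb{R}^n$ is the $p$-th row of $G$.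
   Context: $\mathbb{IR}$ is the set of closed bounded real intervals; $\mathbb{IR}^n$, $\mathbb{IR}^{d\times n}$ are interval vectors/matrices, with intersection and membership componentwise. Operations between intervals and reals are standard interval arithmetic ($\mathcal{A}+\mathcal{B}=\{a+b\}$, $c\mathcal{A}=\{ca\}$, $\mathcal{A}-\mathcal{B}=\{a-b\}$ for $a\in\mathcal{A},b\in\mathcal{B}$), real numbers being identified with degenerate intervals. For $u\in\mathbb{R}^m$ and $\alpha\in\mathbb{N}^m$, $u[\alpha]=u_1^{\alpha_1}\cdots u_m^{\alpha_m}$. *)

From Stdlib Require Import Reals.
Open Scope R_scope.

(* Subsets of R; interval arithmetic is the set-wise (Minkowski) arithmetic
   of the paper: A+B = {a+b}, A-B = {a-b}, cA = {ca}, reals = degenerate intervals. *)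
Definition iset := R -> Prop.

Definition is_interval (A : iset) : Prop :=
  exists lo hi, lo <= hi /\ forall z, A z <-> (lo <= z /\ z <= hi).

Definition ipt (r : R) : iset := fun z => z = r.
Definition iadd (A B : iset) : iset := fun z => exists a b, A a /\ B b /\ z = a + b.
Definition isub (A B : iset) : iset := fun z => exists a b, A a /\ B b /\ z = a - b.
Definition iscal (c : R) (A : iset) : iset := fun z => exists a, A a /\ z = c * a.
Definition icap (A B : iset) : iset := fun z => A z /\ B z.

Fixpoint isum (l c : nat) (F : nat -> iset) : iset :=
  match c with
  | O => ipt 0
  | S c' => iadd (F l) (isum (S l) c' F)
  end.

Fixpoint rsum (l c : nat) (f : nat -> R) : R :=
  match c with
  | O => 0
  | S c' => f l + rsum (S l) c' f
  end.

(* u[a] = u_0^{a_0} * ... * u_{m-1}^{a_{m-1}} (coordinates indexed 0..m-1). *)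
Fixpoint mono (m : nat) (u : nat -> R) (a : nat -> nat) : R :=
  match m with
  | O => 1
  | S m' => mono m' u a * u m' ^ a m'
  end.

Section Contractor.
(* Data for a fixed component k: d, monomial exponents alpha p (p = 1..d),
   input u in R^m, xdot_k, the interval F_k and the intervals G_{p,k}. *)
Variables (d m : nat) (alpha : nat -> nat -> nat) (u : nat -> R)
          (xdk : R) (Fk : iset) (Gk : nat -> iset).

Definition wt (p : nat) : R := mono m u (alpha p).
Definition GU (l : nat) : iset := iscal (wt l) (Gk l).
(* sum_{l=p+1}^d G_{l,k} u[alpha^l] *)
Definition tailsum (p : nat) : iset := isum (S p) (d - p) GU.

Definition CF : iset := icap Fk (isub (ipt xdk) (tailsum 0)).

(* C_{G_{p,k}} computed from S_{p-1,k} *)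
Definition CGstep (p : nat) (Sprev : iset) : iset :=
  if Req_EM_T (wt p) 0 then Gk p
  else iscal (/ wt p) (icap (isub Sprev (tailsum p)) (GU p)).

Fixpoint Sset (p : nat) : iset :=
  match p with
  | O => icap (isub (ipt xdk) CF) (tailsum 0)
  | S p' => icap (isub (Sset p') (iscal (wt p) (CGstep p (Sset p')))) (tailsum p)
  end.

Definition CG (p : nat) : iset := CGstep p (Sset (p - 1)).
End Contractor.

From Stdlib Require Import Reals Arith Lra Lia.
Open Scope R_scope.

(* For a fixed component k the constraint [xd_k = F_k + sum_p G_{p,k} u[alpha^p]]
   couples only the unknowns of row k, so it suffices to describe the contractor
   on one component.  There the invariant is that [S_q] is exactly the set of
   tails [sum_{l>q} G_l u[alpha^l]] of the feasible points: a value in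
   [S_{q-1}] splits as [G_q u[alpha^q]] plus a tail, and any two partial
   solutions can be spliced at index [q] into a feasible point.  Projecting the
   feasible points onto [F] or onto [G_p] then gives [C_F] and [C_{G_p}]. *)

Lemma rsum_ext l c f g : (forall j, (l <= j < l + c)%nat -> f j = g j) ->
  rsum l c f = rsum l c g.
Proof.
  revert l; induction c as [|c IH]; intros l H; simpl; [reflexivity|].
  rewrite (H l) by lia. rewrite (IH (S l)) by (intros; apply H; lia). reflexivity.
Qed.

Lemma rsum_app l a b f : rsum l (a + b) f = rsum l a f + rsum (l + a) b f.
Proof.
  revert l; induction a as [|a IH]; intros l; simpl.
  - rewrite Nat.add_0_r; ring.
  - rewrite IH. replace (S l + a)%nat with (l + S a)%nat by lia. ring.
Qed.

Lemma rsum_split q d f : (q <= d)%nat ->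
  rsum 1 d f = rsum 1 q f + rsum (S q) (d - q) f.
Proof. intros Hq. rewrite <- rsum_app. f_equal. lia. Qed.

Lemma rsum_unfold q d f : (q < d)%nat ->
  rsum (S q) (d - q) f = f (S q) + rsum (S (S q)) (d - S q) f.
Proof. intros Hq. replace (d - q)%nat with (S (d - S q)) by lia. reflexivity. Qed.

Lemma isum_iscal_spec (w : nat -> R) (A : nat -> iset) l c z :
  isum l c (fun j => iscal (w j) (A j)) z <->
  exists G : nat -> R, (forall j, (l <= j < l + c)%nat -> A j (G j)) /\
     z = rsum l c (fun j => G j * w j).
Proof.
  revert l z; induction c as [|c IH]; intros l z; simpl.
  - unfold ipt. split.
    + intros ->. exists (fun _ => 0). split; [intros; lia | reflexivity].
    + intros [G [_ ->]]. reflexivity.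
  - split.
    + intros [b [t [[a [Ha ->]] [Ht ->]]]].
      apply IH in Ht. destruct Ht as [G [HG ->]].
      exists (fun j => if Nat.eq_dec j l then a else G j). split.
      * intros j Hj. destruct (Nat.eq_dec j l); [subst; exact Ha | apply HG; lia].
      * destruct (Nat.eq_dec l l) as [_|]; [|congruence].
        rewrite (rsum_ext (S l) c (fun j => (if Nat.eq_dec j l then a else G j) * w j)
                          (fun j => G j * w j)); [ring|].
        intros j Hj. destruct (Nat.eq_dec j l); [lia | reflexivity].
    + intros [G [HG ->]]. exists (w l * G l), (rsum (S l) c (fun j => G j * w j)).
      split; [exists (G l); split; [apply HG; lia | reflexivity]|].
      split; [apply IH; exists G; split; [intros; apply HG; lia | reflexivity] | ring].
Qed.

Definition feasible (d : nat) (w : nat -> R) (xdk : R) (Fk : iset) (Gk : nat -> iset)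
    (F : R) (G : nat -> R) : Prop :=
  Fk F /\ (forall l, (1 <= l <= d)%nat -> Gk l (G l)) /\
  xdk = F + rsum 1 d (fun l => G l * w l).

Definition splice (q : nat) (G : nat -> R) (a : R) (G' : nat -> R) (j : nat) : R :=
  if le_lt_dec j q then G j else if Nat.eq_dec j (S q) then a else G' j.

Lemma splice_at q G a G' : splice q G a G' (S q) = a.
Proof.
  unfold splice. destruct (le_lt_dec (S q) q); [lia|].
  destruct (Nat.eq_dec (S q) (S q)); [reflexivity | congruence].
Qed.

Section Component.
Variables (d m : nat) (alpha : nat -> nat -> nat) (u : nat -> R)
          (xdk : R) (Fk : iset) (Gk : nat -> iset).

Local Notation w := (wt m alpha u).
Local Notation feas := (feasible d w xdk Fk Gk).
Local Notation tail G q := (rsum (S q) (d - q) (fun l => G l * w l)).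

Lemma tailsum_spec q z :
  tailsum d m alpha u Gk q z <->
  exists G : nat -> R, (forall j, (q < j <= d)%nat -> Gk j (G j)) /\ z = tail G q.
Proof.
  unfold tailsum, GU. rewrite isum_iscal_spec.
  split; intros [G [HG Hz]]; exists G; split; auto; intros j Hj; apply HG; lia.
Qed.

Lemma feasible_tail F G q : (q <= d)%nat -> feas F G ->
  tailsum d m alpha u Gk q (tail G q).
Proof.
  intros Hq [_ [HG _]]. apply tailsum_spec.
  exists G. split; [intros; apply HG; lia | reflexivity].
Qed.

Lemma tail_splice q G a G' : tail (splice q G a G') (S q) = tail G' (S q).
Proof.
  apply rsum_ext. intros j Hj. unfold splice.
  destruct (le_lt_dec j q); [lia|]. destruct (Nat.eq_dec j (S q)); [lia | reflexivity].
Qed.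

Lemma feasible_splice q F G a G' : (q < d)%nat ->
  feas F G -> Gk (S q) a -> (forall j, (S q < j <= d)%nat -> Gk j (G' j)) ->
  a * w (S q) + tail G' (S q) = tail G q ->
  feas F (splice q G a G').
Proof.
  intros Hq [HF [HG Hx]] Ha HG' Hsum. split; [exact HF | split].
  - intros l Hl. unfold splice. destruct (le_lt_dec l q); [apply HG; lia|].
    destruct (Nat.eq_dec l (S q)); [subst; exact Ha | apply HG'; lia].
  - rewrite Hx, !(rsum_split q d) by lia.
    rewrite (rsum_ext 1 q (fun l => splice q G a G' l * w l) (fun l => G l * w l)).
    + rewrite (rsum_unfold q d (fun l => splice q G a G' l * w l)) by exact Hq.
      cbv beta. rewrite splice_at, tail_splice. lra.
    + intros j Hj. unfold splice. destruct (le_lt_dec j q); [reflexivity | lia].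
Qed.

Lemma CF_spec y : CF d m alpha u xdk Fk Gk y <-> exists F G, feas F G /\ F = y.
Proof.
  unfold CF, icap, isub, ipt. split.
  - intros [HF [a [t [-> [Ht ->]]]]]. apply tailsum_spec in Ht.
    destruct Ht as [G [HG ->]]. exists (xdk - tail G 0), G.
    split; [|reflexivity]. split; [exact HF | split].
    + intros l Hl. apply HG. lia.
    + rewrite Nat.sub_0_r. ring.
  - intros [F [G [Hf <-]]]. split; [apply Hf|].
    exists xdk, (tail G 0). split; [reflexivity | split].
    + apply (feasible_tail F); [lia | exact Hf].
    + destruct Hf as [_ [_ Hx]]. rewrite Nat.sub_0_r. lra.
Qed.

Section Step.
Variables (q : nat) (Sprev : iset).
Hypothesis Hq : (q < d)%nat.
Hypothesis HS : forall s, Sprev s <-> exists F G, feas F G /\ s = tail G q.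

Lemma CGstep_sub c : CGstep d m alpha u Gk (S q) Sprev c -> Gk (S q) c.
Proof.
  unfold CGstep. destruct (Req_EM_T (w (S q)) 0) as [E|E]; [auto|].
  intros [z [[_ [a [Ha ->]]] ->]].
  replace (/ w (S q) * (w (S q) * a)) with a by (field; exact E). exact Ha.
Qed.

Lemma CGstep_complete F G : feas F G -> CGstep d m alpha u Gk (S q) Sprev (G (S q)).
Proof.
  intros Hf. assert (HGq : Gk (S q) (G (S q))) by (apply Hf; lia).
  unfold CGstep. destruct (Req_EM_T (w (S q)) 0) as [E|E]; [exact HGq|].
  exists (w (S q) * G (S q)). split; [|field; exact E].
  split; [|exists (G (S q)); split; [exact HGq | reflexivity]].
  exists (tail G q), (tail G (S q)). split; [apply HS; exists F, G; auto | split].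
  - apply (feasible_tail F); [lia | exact Hf].
  - rewrite rsum_unfold by exact Hq. ring.
Qed.

Lemma CGstep_sound F0 G0 y : feas F0 G0 ->
  CGstep d m alpha u Gk (S q) Sprev y -> exists F G, feas F G /\ G (S q) = y.
Proof.
  intros Hf0 Hy. pose proof (CGstep_sub y Hy) as HGy.
  unfold CGstep in Hy. destruct (Req_EM_T (w (S q)) 0) as [E|E].
  - (* with weight zero, [G_{q+1}] is unconstrained: reuse the tail of any feasible point *)
    exists F0, (splice q G0 y G0). split; [|apply splice_at].
    apply feasible_splice; auto; [intros; apply Hf0; lia|].
    rewrite (rsum_unfold q d), E by exact Hq. ring.
  - destruct Hy as [z [[[s [t [Hs [Ht ->]]]] [a [Ha Hz]]] ->]].
    apply HS in Hs. destruct Hs as [F [G [Hf ->]]].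
    apply tailsum_spec in Ht. destruct Ht as [G' [HG' ->]].
    exists F, (splice q G a G'). split.
    + apply feasible_splice; auto. lra.
    + rewrite splice_at, Hz. field. exact E.
Qed.

End Step.

Lemma Sset_spec q y : (q <= d)%nat ->
  Sset d m alpha u xdk Fk Gk q y <-> exists F G, feas F G /\ y = tail G q.
Proof.
  revert y; induction q as [|q IH]; intros y Hq.
  - simpl. unfold icap, isub, ipt. split.
    + intros [[a [c [-> [Hc ->]]]] _]. apply CF_spec in Hc.
      destruct Hc as [F [G [Hf <-]]]. exists F, G. split; [exact Hf|].
      destruct Hf as [_ [_ Hx]]. rewrite Nat.sub_0_r. lra.
    + intros [F [G [Hf ->]]]. split; [|apply (feasible_tail F); [lia | exact Hf]].
      exists xdk, F. split; [reflexivity | split; [apply CF_spec; exists F, G; auto|]].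
      destruct Hf as [_ [_ Hx]]. rewrite Nat.sub_0_r. lra.
  - assert (HS := fun s => IH s ltac:(lia)).
    simpl Sset. unfold icap, isub, iscal. rewrite tailsum_spec. split.
    + intros [[s [z [Hs [[c [Hc ->]] ->]]]] [G' [HG' Ht]]].
      apply CGstep_sub in Hc.
      apply HS in Hs. destruct Hs as [F [G [Hf ->]]].
      exists F, (splice q G c G'). split.
      * apply feasible_splice; auto; lra.
      * rewrite tail_splice. exact Ht.
    + intros [F [G [Hf ->]]]. split.
      * exists (tail G q), (w (S q) * G (S q)). split; [apply HS; exists F, G; auto|].
        split; [exists (G (S q)); split; [|reflexivity]|].
        -- exact (CGstep_complete q _ ltac:(lia) HS F G Hf).
        -- rewrite (rsum_unfold q d) by lia. ring.
      * exists G. split; [intros; apply Hf; lia | reflexivity].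
Qed.

Lemma CG_spec p y F0 G0 : (1 <= p <= d)%nat -> feas F0 G0 ->
  CG d m alpha u xdk Fk Gk p y <-> exists F G, feas F G /\ G p = y.
Proof.
  intros Hp Hf0. destruct p as [|q]; [lia|]. unfold CG.
  replace (S q - 1)%nat with q by lia.
  assert (HS := fun s => Sset_spec q s ltac:(lia)). split.
  - apply (CGstep_sound q _ ltac:(lia) HS F0 G0 y Hf0).
  - intros [F [G [Hf <-]]]. exact (CGstep_complete q _ ltac:(lia) HS F G Hf).
Qed.

End Component.

Section System.
Variables (n d : nat) (w : nat -> R) (xd : nat -> R)
          (FF : nat -> iset) (GG : nat -> nat -> iset).

Lemma feasible_component F G k : (k < n)%nat ->
  (forall k', (k' < n)%nat -> FF k' (F k')) ->
  (forall p k', (1 <= p <= d)%nat -> (k' < n)%nat -> GG p k' (G p k')) ->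
  (forall k', (k' < n)%nat -> xd k' = F k' + rsum 1 d (fun p => G p k' * w p)) ->
  feasible d w (xd k) (FF k) (fun p => GG p k) (F k) (fun p => G p k).
Proof. intros Hk HF HG Hx. split; [auto | split; [intros; apply HG; auto | auto]]. Qed.

Variables (F0 : nat -> R) (G0 : nat -> nat -> R).
Hypothesis HF0 : forall k, (k < n)%nat -> FF k (F0 k).
Hypothesis HG0 : forall p k, (1 <= p <= d)%nat -> (k < n)%nat -> GG p k (G0 p k).
Hypothesis Hx0 : forall k, (k < n)%nat -> xd k = F0 k + rsum 1 d (fun p => G0 p k * w p).

(* A feasible point of component [k] extends to the whole system by taking the
   known solution [(F0, G0)] in the other components. *)
Lemma system_projection k (Q : R -> (nat -> R) -> Prop) : (k < n)%nat ->
  (exists Fc Gc, feasible d w (xd k) (FF k) (fun p => GG p k) Fc Gc /\ Q Fc Gc) <->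
  exists (F : nat -> R) (G : nat -> nat -> R),
    (forall k', (k' < n)%nat -> FF k' (F k')) /\
    (forall p k', (1 <= p <= d)%nat -> (k' < n)%nat -> GG p k' (G p k')) /\
    (forall k', (k' < n)%nat -> xd k' = F k' + rsum 1 d (fun p => G p k' * w p)) /\
    Q (F k) (fun p => G p k).
Proof.
  intros Hk. split.
  - intros [Fc [Gc [[HF [HG Hx]] HQ]]].
    exists (fun k' => if Nat.eq_dec k' k then Fc else F0 k'),
           (fun p k' => if Nat.eq_dec k' k then Gc p else G0 p k').
    destruct (Nat.eq_dec k k) as [_|]; [|congruence].
    split; [|split; [|split; [|exact HQ]]].
    + intros k' Hk'. destruct (Nat.eq_dec k' k); [subst; exact HF | auto].
    + intros p k' Hp Hk'. destruct (Nat.eq_dec k' k); [subst; auto | auto].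
    + intros k' Hk'. destruct (Nat.eq_dec k' k); [subst; exact Hx | auto].
  - intros [F [G [HF [HG [Hx HQ]]]]]. exists (F k), (fun p => G p k).
    split; [apply feasible_component; auto | exact HQ].
Qed.

End System.

Theorem lemma2 (n m d : nat)
  (f : (nat -> R) -> nat -> R) (g : nat -> (nat -> R) -> nat -> R)
  (alpha : nat -> nat -> nat)
  (x xd u : nat -> R)
  (FF : nat -> iset) (GG : nat -> nat -> iset)
  (Hdata : forall k, (k < n)%nat ->
     xd k = f x k + rsum 1 d (fun p => g p x k * mono m u (alpha p)))
  (HFint : forall k, (k < n)%nat -> is_interval (FF k))
  (HGint : forall p k, (1 <= p <= d)%nat -> (k < n)%nat -> is_interval (GG p k))
  (HfF : forall k, (k < n)%nat -> FF k (f x k))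
  (HgG : forall p k, (1 <= p <= d)%nat -> (k < n)%nat -> GG p k (g p x k)) :
  (forall k, (k < n)%nat -> forall y,
     CF d m alpha u (xd k) (FF k) (fun p => GG p k) y <->
     exists (F : nat -> R) (G : nat -> nat -> R),
       (forall k', (k' < n)%nat -> FF k' (F k')) /\
       (forall p k', (1 <= p <= d)%nat -> (k' < n)%nat -> GG p k' (G p k')) /\
       (forall k', (k' < n)%nat ->
          xd k' = F k' + rsum 1 d (fun p => G p k' * mono m u (alpha p))) /\
       F k = y)
  /\
  (forall p k, (1 <= p <= d)%nat -> (k < n)%nat -> forall y,
     CG d m alpha u (xd k) (FF k) (fun p => GG p k) p y <->
     exists (F : nat -> R) (G : nat -> nat -> R),
       (forall k', (k' < n)%nat -> FF k' (F k')) /\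
       (forall p' k', (1 <= p' <= d)%nat -> (k' < n)%nat -> GG p' k' (G p' k')) /\
       (forall k', (k' < n)%nat ->
          xd k' = F k' + rsum 1 d (fun p' => G p' k' * mono m u (alpha p'))) /\
       G p k = y).
Proof.
  set (G0 := fun p k => g p x k).
  pose proof (system_projection n d (wt m alpha u) xd FF GG (f x) G0 HfF HgG Hdata)
    as Hproj.
  split.
  - intros k Hk y. rewrite CF_spec.
    exact (Hproj k (fun F _ => F = y) Hk).
  - intros p k Hp Hk y.
    rewrite (CG_spec d m alpha u _ _ _ p y (f x k) (fun p => G0 p k) Hp)
      by exact (feasible_component n d _ xd FF GG (f x) G0 k Hk HfF HgG Hdata).
    exact (Hproj k (fun _ G => G p = y) Hk).
Qed.
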